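(* Let $\lambda$ be a partition with $d$ distinct part sizes and parameters $(h_1,\dots,h_d)$, $(v_1,\dots,v_d)$. Define $p^{\rm col}_{r,s}(q,t)=p_{r,s}(q^{-1},t^{-1})$ and $\overline{p}^{\rm col}_{r,s}(q,t)=\overline{p}_{r,s}(q^{-1},t^{-1})$. Then for $0\le s\le d$, \[ p^{\rm col}_{r,s}(q,t)=\begin{cases}q^{h_{s+1,d}}\alpha_s&r=0,\\ \tau^{\rm col}_{r,s}\dfrac{\alpha_s\beta_r}{\gamma'_{r,s}}&1\le r\le d,\end{cases}\qquad \overline{p}^{\rm col}_{r,s}(q,t)=\begin{cases}q^{h_{s+1,d}}\overline{\alpha}_s&r=0,\\ \tau^{\rm col}_{r,s}\dfrac{\overline{\alpha}_s\overline{\beta}_r}{\gamma'_{r,s}}&1\le r\le d,\end{cases} \] where (all of $\alpha_s,\overline{\alpha}_s,\beta_r,\overline{\beta}_r,\gamma'_{r,s}$ evaluated at $(q,t)$) $\tau^{\rm col}_{r,s}=q^{-1+h_{r,s}}t^{1+2v_{r+1,s}}$ if $0<r\le s$, and $\tau^{\rm col}_{r,s}=q^{h_{s+1,r-1}}$ if $r>s$.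
   Context: Partitions are Young diagrams in French convention (cells $(x,y)\in\mathbb{Z}_{>0}^2$, $x\le\lambda_y$), $\lambda'$ the conjugate; for $c=(x,y)\in\lambda$, $a_\lambda(c)=\lambda_y-x$, $\ell_\lambda(c)=\lambda'_x-y$; $n(\kappa)=\sum_{c\in\kappa}\ell_\kappa(c)$, $n'(\kappa)=\sum_{c\in\kappa}a_\kappa(c)$, $n(\rho/\kappa)=n(\rho)-n(\kappa)$, $n'(\rho/\kappa)=n'(\rho)-n'(\kappa)$. For $\kappa\subseteq\rho$, $\mathcal{R}_{\rho/\kappa}$ (resp. $\mathcal{C}_{\rho/\kappa}$): cells of $\kappa$ in a row (resp. column) containing a cell of $\rho/\kappa$. $[i,j]=1-q^it^j$, $[i,j]^+=[i+1,j-1]$, $[i,j]^-=[i-1,j+1]$. For $\kappa\lessdot\rho$ (one-cell difference): $\alpha_{\rho/\kappa}=\prod_{c\in\mathcal{R}_{\rho/\kappa}}\frac{[a_\kappa(c),\ell_\kappa(c)+1]}{[a_\rho(c),\ell_\rho(c)+1]}\prod_{c\in\mathcal{C}_{\rho/\kappa}}\frac{[a_\kappa(c)+1,\ell_\kappa(c)]}{[a_\rho(c)+1,\ell_\rho(c)]}$, $\overline{\alpha}_{\rho/\kappa}=\prod_{c\in\mathcal{R}_{\rho/\kappa}}\frac{[a_\kappa(c)+1,\ell_\kappa(c)]}{[a_\rho(c)+1,\ell_\rho(c)]}\prod_{c\in\mathcal{C}_{\rho/\kappa}}\frac{[a_\kappa(c),\ell_\kappa(c)+1]}{[a_\rho(c),\ell_\rho(c)+1]}$,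 $\beta=1/\alpha$, $\overline{\beta}=1/\overline{\alpha}$. For $\mu\lessdot\lambda\lessdot\nu$, with $A=n'(\lambda/\mu)-n'(\nu/\lambda)$, $B=n(\nu/\lambda)-n(\lambda/\mu)$: $\gamma_{\nu/\lambda/\mu}=\frac{(1-q^At^B)(1-q^{A+1}t^{B-1})}{(1-q)(1-t)}$. Probabilities: $\mathcal{P}_\lambda(\lambda\rightarrow\nu)=t^{n(\nu/\lambda)}\alpha_{\nu/\lambda}$, $\overline{\mathcal{P}}_\lambda(\lambda\leftarrow\nu)=t^{n(\nu/\lambda)}\overline{\alpha}_{\nu/\lambda}$, for $\mu\lessdot\lambda$: $\mathcal{P}_\lambda(\mu\rightarrow\nu)=t^{B-1}\alpha_{\nu/\lambda}\beta_{\lambda/\mu}/\gamma_{\nu/\lambda/\mu}$, $\overline{\mathcal{P}}_\lambda(\mu\leftarrow\nu)=t^{B-1}\overline{\alpha}_{\nu/\lambda}\overline{\beta}_{\lambda/\mu}/\gamma_{\nu/\lambda/\mu}$. Parameters: if $\lambda$ has distinct part sizes $u_1>\dots>u_d>0$, $v_i$ is the multiplicity of $u_i$ and $h_i=u_i-u_{i+1}$ ($u_{d+1}=0$); $h_{i,j}=h_i+\dots+h_j$, $v_{i,j}=v_i+\dots+v_j$ for $i\le j$, and $0$ for $i>j$. For $0\le s\le d$, $\lambda^{(+s)}$ adds a cell in row $v_{1,s}+1$; $\lambda^{(-0)}=\lambda$, and for $1\le r\le d$, $\lambda^{(-r)}$ removes a cell from row $v_{1,r}$. $\alpha_s=\alpha_{\lambda^{(+s)}/\lambda}$,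 $\overline{\alpha}_s=\overline{\alpha}_{\lambda^{(+s)}/\lambda}$, $\beta_r=\beta_{\lambda/\lambda^{(-r)}}$, $\overline{\beta}_r=\overline{\beta}_{\lambda/\lambda^{(-r)}}$, $p_{r,s}=\mathcal{P}_\lambda(\lambda^{(-r)}\rightarrow\lambda^{(+s)})$, $\overline{p}_{r,s}=\overline{\mathcal{P}}_\lambda(\lambda^{(-r)}\leftarrow\lambda^{(+s)})$, and $\gamma'_{r,s}=\frac{[h_{r,s},v_{r+1,s}][h_{r,s},v_{r+1,s}]^-}{[0,1][1,0]}$ if $0<r\le s$, $\gamma'_{r,s}=\frac{[h_{s+1,r-1},v_{s+1,r}][h_{s+1,r-1},v_{s+1,r}]^+}{[0,1][1,0]}$ if $r>s$. *)

From mathcomp Require Import all_boot all_order all_algebra.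
Set Implicit Arguments.
Unset Strict Implicit.
Unset Printing Implicit Defensive.
Import Order.TTheory GRing.Theory Num.Theory.

(* French convention: cell (x,y) with x = column, y = row, 1 <= x <= la_y.
   Lists may carry trailing zero parts (e.g. after removing the last cell of a
   row of length 1); zero parts contribute no cells. *)

Definition is_partition (la : seq nat) : bool :=
  sorted geq la && all (fun x => 0 < x)%N la.

(* la_y, 1-indexed, 0 beyond the length *)
Definition part (la : seq nat) (y : nat) : nat := nth 0%N la y.-1.

(* la'_x : number of rows of length >= x (used for x >= 1) *)
Definition conj_part (la : seq nat) (x : nat) : nat := count (fun p => x <= p)%N la.

Definition in_part (la : seq nat) (c : nat * nat) : bool :=
  [&& 0 < c.1, 0 < c.2 & c.1 <= part la c.2]%N.

Definition cells (la : seq nat) : seq (nat * nat) :=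
  [seq (x, y) | y <- iota 1 (size la), x <- iota 1 (part la y)].

Definition arm (la : seq nat) (c : nat * nat) : nat := (part la c.2 - c.1)%N.
Definition leg (la : seq nat) (c : nat * nat) : nat := (conj_part la c.1 - c.2)%N.

Definition nfun (la : seq nat) : nat := (\sum_(c <- cells la) leg la c)%N.
Definition nfun' (la : seq nat) : nat := (\sum_(c <- cells la) arm la c)%N.

Definition nskew (rho ka : seq nat) : int := (nfun rho)%:Z - (nfun ka)%:Z.
Definition nskew' (rho ka : seq nat) : int := (nfun' rho)%:Z - (nfun' ka)%:Z.

Definition skew_cells (rho ka : seq nat) : seq (nat * nat) :=
  [seq c <- cells rho | ~~ in_part ka c].

Definition Rcells (rho ka : seq nat) : seq (nat * nat) :=
  [seq c <- cells ka | has (fun e => e.2 == c.2) (skew_cells rho ka)].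
Definition Ccells (rho ka : seq nat) : seq (nat * nat) :=
  [seq c <- cells ka | has (fun e => e.1 == c.1) (skew_cells rho ka)].

Definition dnum (la : seq nat) : nat := size (undup la).
Definition upart (la : seq nat) (i : nat) : nat := nth 0%N (undup la) i.-1.
Definition vmult (la : seq nat) (i : nat) : nat := count_mem (upart la i) la.
Definition hgap (la : seq nat) (i : nat) : nat := (upart la i - upart la i.+1)%N.
Definition hsum (la : seq nat) (i j : nat) : nat := (\sum_(i <= k < j.+1) hgap la k)%N.
Definition vsum (la : seq nat) (i j : nat) : nat := (\sum_(i <= k < j.+1) vmult la k)%N.

(* la^(+s): add a cell in row v_{1,s}+1 *)
Definition addcell (la : seq nat) (s : nat) : seq nat := incr_nth la (vsum la 1 s).
(* la^(-r): remove a cell from row v_{1,r} (la^(-0) = la) *)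
Definition remcell (la : seq nat) (r : nat) : seq nat :=
  if r == 0%N then la
  else set_nth 0%N la (vsum la 1 r).-1 (nth 0%N la (vsum la 1 r).-1).-1.

Local Open Scope ring_scope.

Section QT.
Variables (R : fieldType) (q t : R).

Definition brk (i j : int) : R := 1 - q ^ i * t ^ j.

Definition alpha (rho ka : seq nat) : R :=
  (\prod_(c <- Rcells rho ka)
     (brk (arm ka c) (leg ka c).+1 / brk (arm rho c) (leg rho c).+1)) *
  (\prod_(c <- Ccells rho ka)
     (brk (arm ka c).+1 (leg ka c) / brk (arm rho c).+1 (leg rho c))).

Definition alphabar (rho ka : seq nat) : R :=
  (\prod_(c <- Rcells rho ka)
     (brk (arm ka c).+1 (leg ka c) / brk (arm rho c).+1 (leg rho c))) *
  (\prod_(c <- Ccells rho ka)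
     (brk (arm ka c) (leg ka c).+1 / brk (arm rho c) (leg rho c).+1)).

Definition beta (rho ka : seq nat) : R := (alpha rho ka)^-1.
Definition betabar (rho ka : seq nat) : R := (alphabar rho ka)^-1.

Definition Aexp (nu la mu : seq nat) : int := nskew' la mu - nskew' nu la.
Definition Bexp (nu la mu : seq nat) : int := nskew nu la - nskew la mu.

Definition gamma (nu la mu : seq nat) : R :=
  (1 - q ^ Aexp nu la mu * t ^ Bexp nu la mu) *
  (1 - q ^ (Aexp nu la mu + 1) * t ^ (Bexp nu la mu - 1)) / ((1 - q) * (1 - t)).

Definition Pstep (la nu : seq nat) : R := t ^ nskew nu la * alpha nu la.
Definition Pbarstep (la nu : seq nat) : R := t ^ nskew nu la * alphabar nu la.

(* P_la(mu -> nu), Pbar_la(mu <- nu) for mu <. la <. nu *)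
Definition Ptrans (la mu nu : seq nat) : R :=
  t ^ (Bexp nu la mu - 1) * alpha nu la * beta la mu / gamma nu la mu.
Definition Pbartrans (la mu nu : seq nat) : R :=
  t ^ (Bexp nu la mu - 1) * alphabar nu la * betabar la mu / gamma nu la mu.

Definition prs (la : seq nat) (r s : nat) : R :=
  if r == 0%N then Pstep la (addcell la s)
  else Ptrans la (remcell la r) (addcell la s).
Definition pbarrs (la : seq nat) (r s : nat) : R :=
  if r == 0%N then Pbarstep la (addcell la s)
  else Pbartrans la (remcell la r) (addcell la s).

Definition alpha_s (la : seq nat) (s : nat) : R := alpha (addcell la s) la.
Definition alphabar_s (la : seq nat) (s : nat) : R := alphabar (addcell la s) la.
Definition beta_r (la : seq nat) (r : nat) : R := beta la (remcell la r).
Definition betabar_r (la : seq nat) (r : nat) : R := betabar la (remcell la r).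

(* gamma'_{r,s}, for r >= 1 *)
Definition gammap (la : seq nat) (r s : nat) : R :=
  if (r <= s)%N then
    brk (hsum la r s) (vsum la r.+1 s) *
    brk ((hsum la r s)%:Z - 1) ((vsum la r.+1 s)%:Z + 1) / (brk 0 1 * brk 1 0)
  else
    brk (hsum la s.+1 r.-1) (vsum la s.+1 r) *
    brk ((hsum la s.+1 r.-1)%:Z + 1) ((vsum la s.+1 r)%:Z - 1) / (brk 0 1 * brk 1 0).

(* tau^col_{r,s}, for r >= 1 *)
Definition tau_col (la : seq nat) (r s : nat) : R :=
  if (r <= s)%N then q ^ (-1 + (hsum la r s)%:Z) * t ^ (1 + 2 * (vsum la r.+1 s)%:Z)
  else q ^ (hsum la s.+1 r.-1)%:Z.

End QT.

Definition pcol (R : fieldType) (q t : R) (la : seq nat) (r s : nat) : R :=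
  prs q^-1 t^-1 la r s.
Definition pbarcol (R : fieldType) (q t : R) (la : seq nat) (r s : nat) : R :=
  pbarrs q^-1 t^-1 la r s.

From mathcomp Require Import all_boot all_order all_algebra.
From mathcomp Require Import zify ring.
Set Implicit Arguments.
Unset Strict Implicit.
Unset Printing Implicit Defensive.
Import Order.TTheory GRing.Theory Num.Theory.

(* Adding the cell (k_{i+1}+1, i+1) to a diagram k raises by one the arms of
   the k_{i+1} cells in its row and the legs of the i cells in its column, and
   no other arm or leg.  Hence n and n' grow by i and k_{i+1}, and inverting
   (q,t) multiplies each row factor [a,l]/[a+1,l] of alpha by q and each column
   factor [a,l]/[a,l+1] by t: alpha(1/q,1/t) = q^{k_{i+1}} t^i alpha(q,t), and
   likewise for alphabar.  The cell added by la^(+s) lies in row v_{1,s}+1 and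
   column u_{s+1}+1, the one removed by la^(-r) in row v_{1,r} and column u_r.
   For r = 0 this leaves q^{u_{s+1}} = q^{h_{s+1,d}}.  For r > 0, viewing gamma
   as a function gamma(A,B) of its exponents, gamma(1/q,1/t) =
   t^2 (q^A t^B)^-2 gamma(q,t), so p^col_{r,s} = q^A t^(2B-1) alpha beta /
   gamma(A,B) with A = u_r - 1 - u_{s+1} and B = v_{1,s} - v_{1,r} + 1.  If
   r <= s then A = h_{r,s} - 1, B = v_{r+1,s} + 1 and gamma(A,B) = gamma'_{r,s};
   if r > s then gamma'_{r,s} = gamma(-A-1, 1-B) = t q^-1 (q^A t^B)^-2 gamma(A,B). *)

Lemma mem_cells ka c : (c \in cells ka) = in_part ka c.
Proof.
case: c => x y; rewrite /in_part /=; apply/allpairsPdep/idP.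
  by move=> [y' [x' [+ + [-> ->]]]]; rewrite !mem_iota; lia.
move=> /and3P[x_gt0 y_gt0 x_le]; exists y, x; rewrite !mem_iota; split=> //; last lia.
suff : (y.-1 < size ka)%N by lia.
by rewrite ltnNge; apply: contraTN x_le => /(nth_default 0); rewrite /part => ->; lia.
Qed.

Lemma cells_uniq ka : uniq (cells ka).
Proof.
apply: allpairs_uniq_dep => [|y _|[y1 x1] [y2 x2] _ _ /= [-> ->]] //; exact: iota_uniq.
Qed.

Lemma count_cells_row ka y : (0 < y)%N ->
  count (fun c : nat * nat => c.2 == y) (cells ka) = part ka y.
Proof.
move=> y_gt0; rewrite /cells count_flatten -map_comp.
rewrite (eq_map (g := fun y' => if y' == y then part ka y else 0%N)); last first.
  move=> y' /=; rewrite count_map (eq_count (a2 := fun=> y' == y)) //.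
  case: eqVneq => [->|_]; last exact: count_pred0.
  by rewrite -[in RHS](size_iota 1 (part ka y)); exact: count_predT.
rewrite sumnE big_map -big_mkcond big_const_seq count_uniq_mem ?iota_uniq //.
rewrite mem_iota y_gt0 /=; case: ltnP => y_le /=; first exact: addn0.
by rewrite /part nth_default //; lia.
Qed.

Lemma count_cells_col ka x : (0 < x)%N ->
  count (fun c : nat * nat => c.1 == x) (cells ka) = conj_part ka x.
Proof.
move=> x_gt0; rewrite /cells count_flatten -map_comp.
rewrite (eq_map (g := fun y => nat_of_bool (x <= part ka y)%N)); last first.
  move=> y /=; rewrite count_map (eq_count (a2 := pred1 x)) //.
  by rewrite count_uniq_mem ?iota_uniq // mem_iota x_gt0 /= add1n ltnS.
have -> : iota 1 (size ka) = map succn (iota 0 (size ka)) by rewrite -(iotaDl 1).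
rewrite -map_comp (map_comp (fun p => nat_of_bool (x <= p)%N)) /conj_part -sumn_count.
by congr (sumn (map _ _)); exact: (mkseq_nth 0 ka).
Qed.

Lemma part_incr_nth ka i y : (0 < y)%N ->
  part (incr_nth ka i) y = (part ka y + (y == i.+1))%N.
Proof. by case: y => // y _; rewrite /part nth_incr_nth eqSS eq_sym addnC. Qed.

Lemma conj_part_incr_nth ka i x : (0 < x)%N ->
  conj_part (incr_nth ka i) x = (conj_part ka x + (x == (nth 0 ka i).+1))%N.
Proof.
rewrite /conj_part => x_gt0; elim: ka i => [|p ka IH] [|i] /=.
- by case: x x_gt0 => [|[|x]].
- elim: i => [|i IHi] /=; first by case: x x_gt0 => [|[|x]].
  by move: IHi; rewrite leqNgt x_gt0.
- by rewrite (leq_eqVlt x p.+1) ltnS; case: eqVneq => [->|] /=; rewrite ?ltnn; lia.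
- by rewrite IH; lia.
Qed.

(* A cell can be added at the end of row [i.+1] of [ka]; rows are 0-based for
   [nth] but 1-based for [part]. *)
Definition addable (ka : seq nat) (i : nat) : Prop :=
  [/\ (i <= size ka)%N,
      forall j, (j < i)%N -> (nth 0 ka i < nth 0 ka j)%N &
      forall j, (i <= j)%N -> (nth 0 ka j <= nth 0 ka i)%N].

Definition added_cell (ka : seq nat) (i : nat) : nat * nat := ((nth 0 ka i).+1, i.+1).

Section AddCell.

Variables (ka : seq nat) (i : nat).
Hypothesis ka_i : addable ka i.

Lemma conj_part_addable : conj_part ka (nth 0 ka i).+1 = i.
Proof.
case: ka_i => i_le lt_before le_after.
rewrite /conj_part; set x := (nth 0 ka i).+1; rewrite -(cat_take_drop i ka) count_cat.
have -> : count (fun p => x <= p)%N (take i ka) = i.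
  rewrite -[RHS](size_takel i_le); apply/eqP; rewrite -all_count.
  by apply/(all_nthP 0) => j; rewrite size_takel // => j_lt; rewrite nth_take // lt_before.
suff -> : count (fun p => x <= p)%N (drop i ka) = 0%N by rewrite addn0.
apply/eqP; rewrite -leqn0 leqNgt -has_count; apply/(has_nthP 0) => -[j].
by rewrite size_drop nth_drop => _; rewrite /x leqNgt ltnS le_after ?leq_addr.
Qed.

Lemma in_part_incr_nth c :
  in_part (incr_nth ka i) c = in_part ka c || (c == added_cell ka i).
Proof.
case: ka_i => i_le lt_before le_after; case: c => x y; rewrite /in_part /=.
have [->|y_gt0] := posnP y; first by rewrite xpair_eqE /= !andbF.
rewrite part_incr_nth // /part xpair_eqE.
case: (eqVneq y i.+1) => [->|_] /=; last by rewrite addn0 andbF orbF.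
by rewrite addn1; case: ltngtP; lia.
Qed.

Lemma added_cell_notin : ~~ in_part ka (added_cell ka i).
Proof. by rewrite /in_part /part /= ltnn. Qed.

Lemma perm_cells_incr_nth :
  perm_eq (cells (incr_nth ka i)) (added_cell ka i :: cells ka).
Proof.
apply: uniq_perm; rewrite /= ?cells_uniq ?mem_cells ?added_cell_notin //.
by move=> c; rewrite in_cons !mem_cells in_part_incr_nth orbC.
Qed.

Lemma mem_skew_cells_incr_nth : skew_cells (incr_nth ka i) ka =i [:: added_cell ka i].
Proof.
move=> c; rewrite mem_seq1 mem_filter mem_cells in_part_incr_nth.
by case: eqVneq => [->|_]; rewrite ?added_cell_notin ?orbT ?orbF ?andNb.
Qed.

Lemma Rcells_incr_nth : Rcells (incr_nth ka i) ka = [seq c <- cells ka | c.2 == i.+1].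
Proof.
by apply: eq_filter => c; rewrite (eq_has_r mem_skew_cells_incr_nth) has_seq1 eq_sym.
Qed.

Lemma Ccells_incr_nth :
  Ccells (incr_nth ka i) ka = [seq c <- cells ka | c.1 == (nth 0 ka i).+1].
Proof.
by apply: eq_filter => c; rewrite (eq_has_r mem_skew_cells_incr_nth) has_seq1 eq_sym.
Qed.

Lemma size_Rcells_incr_nth : size (Rcells (incr_nth ka i) ka) = nth 0 ka i.
Proof. by rewrite Rcells_incr_nth size_filter count_cells_row. Qed.

Lemma size_Ccells_incr_nth : size (Ccells (incr_nth ka i) ka) = i.
Proof. by rewrite Ccells_incr_nth size_filter count_cells_col ?conj_part_addable. Qed.

Lemma arm_incr_nth c : in_part ka c ->
  arm (incr_nth ka i) c = (arm ka c + (c.2 == i.+1))%N.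
Proof.
case: c => x y; rewrite /in_part /= => /and3P[_ y_gt0 x_le].
by rewrite /arm part_incr_nth //=; lia.
Qed.

Lemma leg_incr_nth c : in_part ka c ->
  leg (incr_nth ka i) c = (leg ka c + (c.1 == (nth 0 ka i).+1))%N.
Proof.
case: c => x y; rewrite /in_part /= => /and3P[x_gt0 y_gt0 x_le].
rewrite /leg conj_part_incr_nth //=.
case: eqVneq => [x_eq|]; last by rewrite !addn0.
suff y_le : (y <= i)%N by rewrite x_eq conj_part_addable; lia.
case: ka_i => _ _ le_after; rewrite leqNgt; apply/negP => i_lt.
have := le_after y.-1; move: x_le; rewrite /part x_eq; lia.
Qed.

Lemma arm_leg_Rcells_incr_nth c : c \in Rcells (incr_nth ka i) ka ->
  arm (incr_nth ka i) c = (arm ka c).+1 /\ leg (incr_nth ka i) c = leg ka c.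
Proof.
rewrite Rcells_incr_nth mem_filter mem_cells => /andP[/eqP c2 c_in].
rewrite arm_incr_nth // leg_incr_nth // c2 eqxx.
by move: c_in; rewrite /in_part c2 /part /= => /andP[_ c1_le]; case: eqVneq; lia.
Qed.

Lemma arm_leg_Ccells_incr_nth c : c \in Ccells (incr_nth ka i) ka ->
  arm (incr_nth ka i) c = arm ka c /\ leg (incr_nth ka i) c = (leg ka c).+1.
Proof.
rewrite Ccells_incr_nth mem_filter mem_cells => /andP[/eqP c1 c_in].
rewrite arm_incr_nth // leg_incr_nth // c1 eqxx.
move: c_in; rewrite /in_part c1 /part; case: c c1 => x y /= _ /andP[_ x_le].
by case: eqVneq => [y_eq|]; [move: x_le; rewrite y_eq /=; lia | lia].
Qed.

Lemma nskew_incr_nth : nskew (incr_nth ka i) ka = i.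
Proof.
rewrite /nskew /nfun (perm_big _ perm_cells_incr_nth) big_cons.
have -> : leg (incr_nth ka i) (added_cell ka i) = 0%N.
  by rewrite /leg conj_part_incr_nth //= eqxx conj_part_addable addn1 subnn.
rewrite /= add0n.
rewrite (eq_big_seq (fun c => leg ka c + if c.1 == (nth 0 ka i).+1 then 1 else 0)%N); last first.
  by move=> c; rewrite mem_cells => c_in; rewrite leg_incr_nth.
rewrite big_split /= -big_mkcond sum1_count count_cells_col //.
by rewrite conj_part_addable PoszD addrAC subrr add0r.
Qed.

Lemma nskew'_incr_nth : nskew' (incr_nth ka i) ka = nth 0 ka i.
Proof.
rewrite /nskew' /nfun' (perm_big _ perm_cells_incr_nth) big_cons.
have -> : arm (incr_nth ka i) (added_cell ka i) = 0%N.
  by rewrite /arm part_incr_nth //= eqxx addn1 subnn.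
rewrite /= add0n.
rewrite (eq_big_seq (fun c => arm ka c + if c.2 == i.+1 then 1 else 0)%N); last first.
  by move=> c; rewrite mem_cells => c_in; rewrite arm_incr_nth.
rewrite big_split /= -big_mkcond sum1_count count_cells_row //.
by rewrite PoszD addrAC subrr add0r.
Qed.

End AddCell.

Lemma geq_trans : transitive geq.
Proof. by move=> n m p mn np; apply: leq_trans np mn. Qed.

Lemma gtn_trans : transitive gtn.
Proof. by move=> n m p mn np; apply: ltn_trans np mn. Qed.

Lemma nth_sorted_geq (s : seq nat) j k :
  sorted geq s -> (j <= k)%N -> (nth 0 s k <= nth 0 s j)%N.
Proof.
move=> s_sorted j_le; have [k_lt|k_ge] := ltnP k (size s); last by rewrite nth_default.
by apply: (sorted_leq_nth geq_trans leqnn) => //; rewrite inE; lia.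
Qed.

Lemma ltn_count_sorted_geq (s : seq nat) a j : sorted geq s ->
  (j < count (fun p => a < p) s)%N = (a < nth 0 s j)%N.
Proof.
elim: s j => [|p s IH] j /= s_sorted; first by rewrite nth_nil.
have s_le_p : all (geq p) s := order_path_min geq_trans s_sorted.
case: (ltnP a p) => [a_lt|a_ge] /=.
  by case: j => [|j]; rewrite //= add1n ltnS IH ?(path_sorted s_sorted).
have -> : count (fun p => a < p)%N s = 0%N.
  apply/eqP; rewrite -leqn0 leqNgt -has_count; apply/hasP => -[x x_in].
  by have /= := allP s_le_p x x_in; lia.
case: j => [|j] /=; first by rewrite [RHS]ltnNge a_ge.
apply/esym/negbTE; rewrite -leqNgt.
exact: leq_trans (@nth_sorted_geq (p :: s) 0 j.+1 s_sorted _) a_ge.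
Qed.

Lemma incr_nth_set_nth_pred (s : seq nat) i : (i < size s)%N -> (0 < nth 0 s i)%N ->
  incr_nth (set_nth 0 s i (nth 0 s i).-1) i = s.
Proof.
move=> i_lt s_i_gt0; apply: (@eq_from_nth _ 0).
  by rewrite size_incr_nth size_set_nth (maxn_idPr i_lt) i_lt.
by move=> j _; rewrite nth_incr_nth nth_set_nth /=; case: (eqVneq j i) => [->|]; lia.
Qed.

Lemma vsum1S la k : vsum la 1 k.+1 = (vsum la 1 k + vmult la k.+1)%N.
Proof. by rewrite /vsum big_nat_recr. Qed.

Lemma vsum_cat la r s : (r <= s)%N -> vsum la 1 s = (vsum la 1 r + vsum la r.+1 s)%N.
Proof. by move=> r_le; rewrite /vsum -big_cat_nat. Qed.

Section PartitionParameters.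

Variable la : seq nat.
Hypothesis la_part : is_partition la.

Let la_sorted : sorted geq la. Proof. by case/andP: la_part. Qed.

Lemma mem_upart k : (0 < k <= dnum la)%N -> upart la k \in la.
Proof. by move=> k_in; rewrite -mem_undup mem_nth //; rewrite /dnum in k_in; lia. Qed.

Lemma part_gt0 p : p \in la -> (0 < p)%N.
Proof. by case/andP: la_part => _ /allP; apply. Qed.

Lemma upart_gt0 k : (0 < k <= dnum la)%N -> (0 < upart la k)%N.
Proof. by move/mem_upart/part_gt0. Qed.

Lemma upart_default k : (dnum la < k)%N -> upart la k = 0%N.
Proof. by move=> k_gt; rewrite /upart nth_default // -ltnS (ltn_predK k_gt). Qed.

Lemma upart_geq j k : (0 < j <= k)%N -> (upart la k <= upart la j)%N.
Proof. by move=> j_le; apply: nth_sorted_geq (undup_sorted geq_trans la_sorted) _; lia. Qed.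

Lemma ltn_upart j k : (0 < j <= dnum la)%N -> (0 < k)%N ->
  (upart la k < upart la j)%N = (j < k)%N.
Proof.
move=> j_in k_gt0; case: (ltnP j k) => [j_lt|k_le].
  2: by rewrite ltnNge upart_geq ?k_gt0.
have [k_le|k_gt] := leqP k (dnum la); last by rewrite upart_default ?upart_gt0.
have : sorted gtn (undup la).
  by rewrite gtn_sorted_uniq_geq undup_uniq (undup_sorted geq_trans la_sorted).
by move=> /(sorted_ltn_nth gtn_trans 0); apply; rewrite ?inE -/(dnum la); lia.
Qed.

Lemma eqn_upart j k : (0 < j <= dnum la)%N -> (0 < k <= dnum la)%N ->
  (upart la j == upart la k) = (j == k).
Proof.
move=> j_in k_in; apply/eqP/eqP => [u_jk|-> //].
have := ltn_upart j_in (proj1 (andP k_in)); have := ltn_upart k_in (proj1 (andP j_in)).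
by rewrite u_jk ltnn; lia.
Qed.

Lemma upart_index p : p \in la -> upart la (index p (undup la)).+1 = p.
Proof. by move=> p_in; rewrite /upart nth_index ?mem_undup. Qed.

Lemma index_undup_lt p : p \in la -> (index p (undup la) < dnum la)%N.
Proof. by rewrite -mem_undup -index_mem. Qed.

Lemma vsum_count k : vsum la 1 k = count (fun p => upart la k.+1 < p)%N la.
Proof.
elim: k => [|k IH].
  rewrite /vsum big_geq //; apply/esym/eqP; rewrite -leqn0 leqNgt -has_count.
  apply/hasP => -[p p_in]; rewrite -(upart_index p_in) ltnNge upart_geq //; lia.
rewrite vsum1S IH /vmult.
have [k_lt|k_ge] := ltnP k (dnum la); last first.
  rewrite !upart_default ?ltnS ?(leqW k_ge) //.
  have /count_memPn -> : 0%N \notin la by apply/negP => /part_gt0.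
  exact: addn0.
rewrite -count_predUI [X in _ + X](@eq_in_count _ _ pred0) ?count_pred0 ?addn0.
  2: by move=> p _; rewrite /= andbC; case: eqP => // ->; rewrite ltnn.
apply: eq_in_count => p p_in; rewrite -(upart_index p_in) /=.
have p_rank := index_undup_lt p_in.
by rewrite !ltn_upart ?eqn_upart //; lia.
Qed.

Lemma ltn_vsum k j : (j < vsum la 1 k)%N = (upart la k.+1 < nth 0 la j)%N.
Proof. by rewrite vsum_count ltn_count_sorted_geq. Qed.

Lemma vsum_leq_size k : (vsum la 1 k <= size la)%N.
Proof. by rewrite vsum_count count_size. Qed.

Lemma vmult_gt0 k : (0 < k <= dnum la)%N -> (0 < vmult la k)%N.
Proof. by move=> /mem_upart; rewrite /vmult -has_pred1 has_count. Qed.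

Lemma vsum_gt0 r : (0 < r <= dnum la)%N -> (0 < vsum la 1 r)%N.
Proof. by case: r => // r r_in; rewrite vsum1S ltn_addl ?vmult_gt0. Qed.

Lemma nth_vsum_block k j : (vsum la 1 k <= j < vsum la 1 k.+1)%N ->
  nth 0 la j = upart la k.+1.
Proof.
rewrite leqNgt !ltn_vsum => /andP[ge_k lt_kS].
have p_in : nth 0 la j \in la.
  by apply: mem_nth; rewrite ltnNge; apply: contraTN lt_kS => /(nth_default 0) ->.
have i_lt := index_undup_lt p_in.
move: ge_k lt_kS; rewrite -(upart_index p_in) !ltn_upart // => ge_k lt_kS.
by congr upart; lia.
Qed.

Lemma nth_vsum s : (s <= dnum la)%N -> nth 0 la (vsum la 1 s) = upart la s.+1.
Proof.
move=> s_le; have [s_lt|s_eq] := ltnP s (dnum la).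
  by apply: nth_vsum_block; rewrite leqnn vsum1S -addn1 leq_add2l vmult_gt0.
rewrite upart_default ?ltnS //; have := ltn_vsum s (vsum la 1 s).
by rewrite ltnn upart_default ?ltnS // lt0n => /esym/negbFE/eqP.
Qed.

Lemma nth_vsum_pred r : (0 < r <= dnum la)%N ->
  nth 0 la (vsum la 1 r).-1 = upart la r.
Proof.
case: r => // r r_in; apply: nth_vsum_block.
by have := vmult_gt0 r_in; rewrite vsum1S; lia.
Qed.

Lemma addable_vsum s : (s <= dnum la)%N -> addable la (vsum la 1 s).
Proof.
move=> s_le; split=> [|j|j]; first exact: vsum_leq_size.
  by rewrite nth_vsum // -ltn_vsum.
exact: nth_sorted_geq.
Qed.

Section RemoveCell.

Variable r : nat.
Hypothesis r_in : (0 < r <= dnum la)%N.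

Let row := (vsum la 1 r).-1.

Let row_lt : (row < size la)%N.
Proof.
by have := vsum_leq_size r; have := vsum_gt0 r_in; rewrite /row; lia.
Qed.

Lemma remcellE : remcell la r = set_nth 0 la row (upart la r).-1.
Proof. by rewrite /remcell -nth_vsum_pred // ifN // -lt0n; case/andP: r_in. Qed.

Lemma incr_nth_remcell : incr_nth (remcell la r) row = la.
Proof.
by rewrite remcellE -nth_vsum_pred // incr_nth_set_nth_pred // nth_vsum_pred // upart_gt0.
Qed.

Lemma nth_remcell : nth 0 (remcell la r) row = (upart la r).-1.
Proof. by rewrite remcellE nth_set_nth /= eqxx. Qed.

Lemma addable_remcell : addable (remcell la r) row.
Proof.
have u_r_gt0 := upart_gt0 r_in; have nth_row := nth_vsum_pred r_in.
split=> [|j j_lt|j j_ge]; rewrite ?nth_remcell remcellE ?size_set_nth ?nth_set_nth /=.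
- by rewrite (maxn_idPr row_lt) ltnW.
- rewrite (ltn_eqF j_lt) -nth_row.
  by have := nth_sorted_geq la_sorted (ltnW j_lt); rewrite nth_row; lia.
case: eqVneq => [//|j_neq]; have v_le_j : (vsum la 1 r <= j)%N.
  by have := vsum_gt0 r_in; move: j_ge j_neq; rewrite /row; lia.
have := nth_sorted_geq la_sorted v_le_j; rewrite nth_vsum; last by case/andP: r_in.
have := ltn_upart r_in (ltn0Sn r); lia.
Qed.

End RemoveCell.

Lemma hsum_upart a b : (0 < a <= b.+1)%N ->
  hsum la a b = (upart la a - upart la b.+1)%N.
Proof.
elim: b => [|b IH] a_in.
  have -> : a = 1%N by lia.
  by rewrite /hsum big_geq // subnn.
have [->|a_neq] := eqVneq a b.+2; first by rewrite /hsum big_geq ?subnn.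
have a_le : (0 < a <= b.+1)%N by lia.
rewrite /hsum big_nat_recr /=; last by lia.
rewrite -/(hsum la a b) IH // /hgap.
have := upart_geq a_le; have := @upart_geq b.+1 b.+2 (leqnSn _); lia.
Qed.

End PartitionParameters.

Local Open Scope ring_scope.

Definition gammaz (R : fieldType) (q t : R) (A B : int) : R :=
  brk q t A B * brk q t (A + 1) (B - 1) / (brk q t 0 1 * brk q t 1 0).

Definition trans_factor (R : fieldType) (q t : R) (A B : int) : R :=
  q ^ A * t ^ (2 * B - 1) / gammaz q t A B.

Lemma gamma_gammaz (R : fieldType) (q t : R) nu la mu :
  gamma q t nu la mu = gammaz q t (Aexp nu la mu) (Bexp nu la mu).
Proof. by rewrite /gamma /gammaz /brk !expr1z !expr0z mulr1 mul1r [(1 - t) * _]mulrC. Qed.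

Lemma prodrMl_seq (R : comPzSemiRingType) (I : Type) (s : seq I) k (F : I -> R) :
  \prod_(x <- s) (k * F x) = k ^+ size s * \prod_(x <- s) F x.
Proof. by rewrite big_split /= big_const_seq count_predT iter_mulr_1. Qed.

Section AlphaAddCell.

Variables (R : fieldType) (q t : R) (ka : seq nat) (i : nat).
Hypothesis ka_i : addable ka i.

Lemma alpha_incr_nthE : alpha q t (incr_nth ka i) ka =
  \prod_(c <- Rcells (incr_nth ka i) ka)
     (brk q t (arm ka c) (leg ka c).+1 / brk q t (arm ka c).+1 (leg ka c).+1) *
  \prod_(c <- Ccells (incr_nth ka i) ka)
     (brk q t (arm ka c).+1 (leg ka c) / brk q t (arm ka c).+1 (leg ka c).+1).
Proof.
congr (_ * _); apply: eq_big_seq => c.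
  by case/(arm_leg_Rcells_incr_nth ka_i) => -> ->.
by case/(arm_leg_Ccells_incr_nth ka_i) => -> ->.
Qed.

Lemma alphabar_incr_nthE : alphabar q t (incr_nth ka i) ka =
  \prod_(c <- Rcells (incr_nth ka i) ka)
     (brk q t (arm ka c).+1 (leg ka c) / brk q t (arm ka c).+2 (leg ka c)) *
  \prod_(c <- Ccells (incr_nth ka i) ka)
     (brk q t (arm ka c) (leg ka c).+1 / brk q t (arm ka c) (leg ka c).+2).
Proof.
congr (_ * _); apply: eq_big_seq => c.
  by case/(arm_leg_Rcells_incr_nth ka_i) => -> ->.
by case/(arm_leg_Ccells_incr_nth ka_i) => -> ->.
Qed.

End AlphaAddCell.

Section Inversion.

Variables (R : fieldType) (q t : R).
Hypotheses (q_neq0 : q != 0) (t_neq0 : t != 0).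
Hypotheses (b01_neq0 : brk q t 0 1 != 0) (b10_neq0 : brk q t 1 0 != 0).

Lemma brk_inv i j : brk q^-1 t^-1 i j = brk q t (- i) (- j).
Proof. by rewrite /brk !exprz_inv. Qed.

Lemma brkN i j : brk q t (- i) (- j) = - (q ^ i * t ^ j)^-1 * brk q t i j.
Proof.
rewrite /brk -!invr_expz; have := expfz_neq0 i q_neq0; have := expfz_neq0 j t_neq0.
by move: (q ^ i) (t ^ j) => Q T T_neq0 Q_neq0; field; rewrite Q_neq0 T_neq0.
Qed.

Lemma brk_inv_ratio a b c d :
  brk q^-1 t^-1 a b / brk q^-1 t^-1 c d =
  q ^ (c - a) * t ^ (d - b) * (brk q t a b / brk q t c d).
Proof.
rewrite !brk_inv !brkN !expfzDr // -!invr_expz.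
have := expfz_neq0 a q_neq0; have := expfz_neq0 c q_neq0.
have := expfz_neq0 b t_neq0; have := expfz_neq0 d t_neq0.
move: (q ^ a) (q ^ c) (t ^ b) (t ^ d) (brk q t a b) (brk q t c d) => A C B D X Y.
move=> D_neq0 B_neq0 C_neq0 A_neq0; have [->|Y_neq0] := eqVneq Y 0.
  by rewrite !(mulr0, invr0).
by field; rewrite A_neq0 B_neq0 C_neq0 D_neq0 Y_neq0 oppr_eq0 oner_eq0.
Qed.

Lemma brk_inv_ratio_q (a : nat) (b : int) :
  brk q^-1 t^-1 a b / brk q^-1 t^-1 a.+1 b = q * (brk q t a b / brk q t a.+1 b).
Proof.
by rewrite brk_inv_ratio (_ : a.+1%:Z - a%:Z = 1) ?subrr ?expr1z ?expr0z ?mulr1 //; lia.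
Qed.

Lemma brk_inv_ratio_t (a : int) (b : nat) :
  brk q^-1 t^-1 a b / brk q^-1 t^-1 a b.+1 = t * (brk q t a b / brk q t a b.+1).
Proof.
by rewrite brk_inv_ratio (_ : b.+1%:Z - b%:Z = 1) ?subrr ?expr1z ?expr0z ?mul1r //; lia.
Qed.

Lemma gammaz_inv A B :
  gammaz q^-1 t^-1 A B = t ^+ 2 / (q ^ A * t ^ B) ^+ 2 * gammaz q t A B.
Proof.
rewrite /gammaz !brk_inv !brkN !expfzDr // !expr1z !expr0z.
have := expfz_neq0 A q_neq0; have := expfz_neq0 B t_neq0.
move: (q ^ A) (t ^ B) (brk q t A B) (brk q t (A + 1) (B - 1)) => QA TB X Y.
move=> TB_neq0 QA_neq0; rewrite !exprN1; field.
by rewrite q_neq0 t_neq0 QA_neq0 TB_neq0 b01_neq0 b10_neq0 !oppr_eq0 oner_eq0.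
Qed.

Lemma gammaz_reflect A B :
  gammaz q t (- A - 1) (1 - B) = t / (q * (q ^ A * t ^ B) ^+ 2) * gammaz q t A B.
Proof.
rewrite /gammaz; have -> : - A - 1 + 1 = - A by ring.
have -> : 1 - B - 1 = - B by ring.
rewrite -opprD -opprB !brkN !expfzDr // !expr1z exprN1.
have := expfz_neq0 A q_neq0; have := expfz_neq0 B t_neq0.
move: (q ^ A) (t ^ B) => QA TB TB_neq0 QA_neq0.
by field; rewrite q_neq0 t_neq0 QA_neq0 TB_neq0 b01_neq0 b10_neq0.
Qed.

Lemma trans_factor_inv (X1 X2 i j : nat) (a b : R) (A B : int) :
  A = X2%:Z - X1%:Z -> B = i%:Z - j%:Z ->
  t^-1 ^ (B - 1) * (q ^+ X1 * t ^+ i * a) * (q ^+ X2 * t ^+ j * b)^-1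
    / gammaz q^-1 t^-1 A B = trans_factor q t A B * (a * b^-1).
Proof.
move=> A_def B_def; rewrite gammaz_inv /trans_factor exprz_inv.
rewrite -[q ^+ X2]/(q ^ X2%:Z) -[t ^+ i]/(t ^ i%:Z).
have -> : X2%:Z = X1%:Z + A by rewrite A_def addrC subrK.
have -> : i%:Z = j%:Z + B by rewrite B_def addrC subrK.
have -> : 2 * B - 1 = B + B - 1 by ring.
rewrite opprB !expfzDr // expr1z exprN1 -invr_expz.
rewrite -[q ^ X1%:Z]/(q ^+ X1) -[t ^ j%:Z]/(t ^+ j).
have := expfz_neq0 A q_neq0; have := expfz_neq0 B t_neq0.
have := expf_neq0 X1 q_neq0; have := expf_neq0 j t_neq0.
move: (q ^ A) (t ^ B) (q ^+ X1) (t ^+ j) (gammaz q t A B) => QA TB QX TJ G.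
move=> TJ_neq0 QX_neq0 TB_neq0 QA_neq0.
have [->|G_neq0] := eqVneq G 0; first by rewrite !(invr0, mulr0, mul0r).
have [->|b_neq0] := eqVneq b 0; first by rewrite !(invr0, mulr0, mul0r).
by field; rewrite t_neq0 QA_neq0 TB_neq0 QX_neq0 TJ_neq0 G_neq0 b_neq0.
Qed.

Section InversionAddCell.

Variables (ka : seq nat) (i : nat).
Hypothesis ka_i : addable ka i.

Lemma alpha_inv : alpha q^-1 t^-1 (incr_nth ka i) ka =
  q ^+ nth 0 ka i * t ^+ i * alpha q t (incr_nth ka i) ka.
Proof.
rewrite !alpha_incr_nthE //.
under eq_bigr do rewrite brk_inv_ratio_q //.
under [X in _ * X]eq_bigr do rewrite brk_inv_ratio_t //.
rewrite !prodrMl_seq size_Rcells_incr_nth // size_Ccells_incr_nth //.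
by rewrite mulrACA.
Qed.

Lemma alphabar_inv : alphabar q^-1 t^-1 (incr_nth ka i) ka =
  q ^+ nth 0 ka i * t ^+ i * alphabar q t (incr_nth ka i) ka.
Proof.
rewrite !alphabar_incr_nthE //.
under eq_bigr do rewrite brk_inv_ratio_q //.
under [X in _ * X]eq_bigr do rewrite brk_inv_ratio_t //.
rewrite !prodrMl_seq size_Rcells_incr_nth // size_Ccells_incr_nth //.
by rewrite mulrACA.
Qed.

Lemma Pstep_inv :
  Pstep q^-1 t^-1 ka (incr_nth ka i) = q ^+ nth 0 ka i * alpha q t (incr_nth ka i) ka.
Proof.
rewrite /Pstep alpha_inv // nskew_incr_nth // -[t^-1 ^ _]/(t^-1 ^+ i) exprVn.
by have := expf_neq0 i t_neq0; move: (t ^+ i) => T T_neq0; field.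
Qed.

Lemma Pbarstep_inv :
  Pbarstep q^-1 t^-1 ka (incr_nth ka i) = q ^+ nth 0 ka i * alphabar q t (incr_nth ka i) ka.
Proof.
rewrite /Pbarstep alphabar_inv // nskew_incr_nth // -[t^-1 ^ _]/(t^-1 ^+ i) exprVn.
by have := expf_neq0 i t_neq0; move: (t ^+ i) => T T_neq0; field.
Qed.

End InversionAddCell.

Lemma Ptrans_inv mu la nu i j :
  addable mu j -> la = incr_nth mu j -> addable la i -> nu = incr_nth la i ->
  Ptrans q^-1 t^-1 la mu nu =
  trans_factor q t ((nth 0 mu j)%:Z - (nth 0 la i)%:Z) (i%:Z - j%:Z) *
    (alpha q t nu la * beta q t la mu).
Proof.
move=> mu_j -> la_i ->; rewrite /Ptrans /beta gamma_gammaz /Aexp /Bexp.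
rewrite !nskew_incr_nth // !nskew'_incr_nth // !alpha_inv //.
exact: trans_factor_inv.
Qed.

Lemma Pbartrans_inv mu la nu i j :
  addable mu j -> la = incr_nth mu j -> addable la i -> nu = incr_nth la i ->
  Pbartrans q^-1 t^-1 la mu nu =
  trans_factor q t ((nth 0 mu j)%:Z - (nth 0 la i)%:Z) (i%:Z - j%:Z) *
    (alphabar q t nu la * betabar q t la mu).
Proof.
move=> mu_j -> la_i ->; rewrite /Pbartrans /betabar gamma_gammaz /Aexp /Bexp.
rewrite !nskew_incr_nth // !nskew'_incr_nth // !alphabar_inv //.
exact: trans_factor_inv.
Qed.


Lemma tau_col_gammap_le la r s : (r <= s)%N ->
  tau_col q t la r s / gammap q t la r s =
  trans_factor q t ((hsum la r s)%:Z - 1) ((vsum la r.+1 s)%:Z + 1).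
Proof.
move=> r_le; rewrite /tau_col /gammap r_le /trans_factor /gammaz subrK addrK.
set h := (hsum la r s)%:Z; set v := (vsum la r.+1 s)%:Z.
have -> : 1 + 2 * v = 2 * (v + 1) - 1 by ring.
by rewrite (addrC (-1)) [brk q t h v * _]mulrC.
Qed.

Lemma trans_factor_reflect A B :
  q ^ (- A - 1) / gammaz q t (- A - 1) (1 - B) = trans_factor q t A B.
Proof.
rewrite gammaz_reflect // /trans_factor; have -> : 2 * B - 1 = B + B - 1 by ring.
rewrite !expfzDr // !exprN1 -invr_expz.
have := expfz_neq0 A q_neq0; have := expfz_neq0 B t_neq0.
move: (q ^ A) (t ^ B) (gammaz q t A B) => QA TB G TB_neq0 QA_neq0.
have [->|G_neq0] := eqVneq G 0; first by rewrite !(invr0, mulr0).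
by field; rewrite q_neq0 t_neq0 QA_neq0 TB_neq0 G_neq0.
Qed.

Lemma tau_col_gammap_gt la r s : (s < r)%N ->
  tau_col q t la r s / gammap q t la r s =
  trans_factor q t (- (hsum la s.+1 r.-1)%:Z - 1) (1 - (vsum la s.+1 r)%:Z).
Proof.
move=> s_lt; rewrite -trans_factor_reflect /tau_col /gammap leqNgt s_lt /=.
set h := (hsum la s.+1 r.-1)%:Z; set v := (vsum la s.+1 r)%:Z.
have -> : - (- h - 1) - 1 = h by ring.
by have -> : 1 - (1 - v) = v by ring.
Qed.

Lemma tau_col_gammap la r s :
  is_partition la -> (0 < r <= dnum la)%N -> (s <= dnum la)%N ->
  tau_col q t la r s / gammap q t la r s =
  trans_factor q t ((upart la r).-1%:Z - (upart la s.+1)%:Z)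
                   ((vsum la 1 s)%:Z - (vsum la 1 r).-1%:Z).
Proof.
move=> la_part r_in s_le; have v_gt0 := vsum_gt0 la_part r_in.
have r_gt0 : (0 < r)%N by case/andP: r_in.
have [r_le|s_lt] := leqP r s.
  rewrite tau_col_gammap_le // (hsum_upart la_part); last lia.
  rewrite (vsum_cat la r_le).
  have := ltn_upart la_part r_in (ltn0Sn s); rewrite ltnS r_le => u_lt.
  by congr trans_factor; lia.
rewrite tau_col_gammap_gt // (hsum_upart la_part); last lia.
rewrite prednK // (vsum_cat la (ltnW s_lt)) in v_gt0 *.
have u_le := @upart_geq la la_part s.+1 r s_lt; have u_gt0 := upart_gt0 la_part r_in.
by congr trans_factor; lia.
Qed.

End Inversion.

Theorem lemma5p1 (R : fieldType) (q t : R) (la : seq nat) (r s : nat) :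
  q != 0 -> t != 0 ->
  (forall i j : int, (i != 0) || (j != 0) -> q ^ i * t ^ j != 1) ->
  is_partition la -> (s <= dnum la)%N -> (r <= dnum la)%N ->
  pcol q t la r s =
    (if r == 0%N then q ^+ hsum la s.+1 (dnum la) * alpha_s q t la s
     else tau_col q t la r s * (alpha_s q t la s * beta_r q t la r) / gammap q t la r s)
  /\
  pbarcol q t la r s =
    (if r == 0%N then q ^+ hsum la s.+1 (dnum la) * alphabar_s q t la s
     else tau_col q t la r s * (alphabar_s q t la s * betabar_r q t la r) / gammap q t la r s).
Proof.
move=> q_neq0 t_neq0 qt_neq1 la_part s_le r_le.
have b01_neq0 : brk q t 0 1 != 0 by rewrite /brk subr_eq0 eq_sym qt_neq1.
have b10_neq0 : brk q t 1 0 != 0 by rewrite /brk subr_eq0 eq_sym qt_neq1.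
have la_s := addable_vsum la_part s_le.
rewrite /pcol /pbarcol /prs /pbarrs /alpha_s /alphabar_s /addcell.
case: r r_le => [|r] r_in /=.
  rewrite Pstep_inv // Pbarstep_inv // nth_vsum // hsum_upart //.
  by rewrite (upart_default (ltnSn _)) subn0.
have {}r_in : (0 < r.+1 <= dnum la)%N := r_in.
have la_r := esym (incr_nth_remcell la_part r_in).
have mu_r := addable_remcell la_part r_in.
rewrite /beta_r /betabar_r.
rewrite (Ptrans_inv q_neq0 t_neq0 b01_neq0 b10_neq0 mu_r la_r la_s erefl).
rewrite (Pbartrans_inv q_neq0 t_neq0 b01_neq0 b10_neq0 mu_r la_r la_s erefl).
rewrite nth_remcell // nth_vsum // -tau_col_gammap //.
by split; rewrite mulrAC.
Qed.
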